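(* Let $0<d_{\min}<d_{\max}$, $N\ge 3$, $T_{\rm s}>0$. For $R_1,\dots,R_N\in[d_{\min},d_{\max}]$ and $\theta_1,\dots,\theta_N\in[0,2\pi)$ with $\sum_{j<k}\sin^2(\theta_j-\theta_k)>0$, let $$S(R,\theta)=\frac{\sum_{k=1}^N R_k^{-2}}{T_{\rm s}\sum_{j<k} R_j^{-2}R_k^{-2}\sin^2(\theta_j-\theta_k)}.$$ Then $S(R,\theta)\ge \frac{4d_{\min}^2}{NT_{\rm s}}$ for all such $(R,\theta)$, and equality holds when $R_1=\dots=R_N=d_{\min}$ and $\theta_k=2\pi k/N$, $k=1,\dots,N$ (anchors at the vertices of a regular $N$-gon inscribed in the circle of radius $d_{\min}$). In particular, the minimum of $S$ over this set, and also the minimum of the GDOP $G(R,\theta)=\frac{NR^2}{T_{\rm s}\sum_{j<k}\sin^2(\theta_j-\theta_k)}$ over $R\in[d_{\min},d_{\max}]$ and such $\theta$, both equal $4d_{\min}^2/(NT_{\rm s})$.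
   Context: $S$ is the squared position error bound for anchors at polar positions $(R_k,\theta_k)$ relative to the target at the origin; $T_{\rm s}>0$ is a fixed constant. *)

From Stdlib Require Import Reals Lra Lia.
Open Scope R_scope.

Fixpoint rsum (n : nat) (f : nat -> R) : R :=
  match n with
  | O => 0
  | S m => rsum m f + f m
  end.

Definition pairsum (n : nat) (g : nat -> nat -> R) : R :=
  rsum n (fun k => rsum k (fun j => g j k)).

(* anchors indexed 0..N-1 (paper: 1..N) *)
Definition sin2sum (N : nat) (th : nat -> R) : R :=
  pairsum N (fun j k => (sin (th j - th k)) ^ 2).

Definition S_bound (N : nat) (Ts : R) (Rr th : nat -> R) : R :=
  rsum N (fun k => / (Rr k ^ 2)) /
  (Ts * pairsum N (fun j k => / (Rr j ^ 2) * / (Rr k ^ 2) * (sin (th j - th k)) ^ 2)).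

Definition GDOP (N : nat) (Ts : R) (r : R) (th : nat -> R) : R :=
  INR N * r ^ 2 / (Ts * sin2sum N th).

Definition admissible_angles (N : nat) (th : nat -> R) : Prop :=
  (forall k, (k < N)%nat -> 0 <= th k < 2 * PI) /\ 0 < sin2sum N th.

Definition admissible_radii (N : nat) (dmin dmax : R) (Rr : nat -> R) : Prop :=
  forall k, (k < N)%nat -> dmin <= Rr k <= dmax.

Definition reg_angles (N : nat) : nat -> R := fun k => 2 * PI * INR k / INR N.

(* With weights [w k = R_k^-2], the denominator of [S] is a Lagrange-type
   identity in disguise: writing [A = Σ w cos² θ], [C = Σ w sin² θ],
   [B = Σ w cos θ sin θ],
   [Σ_{j<k} w_j w_k sin²(θ_j - θ_k) = A C - B² <= (A + C)²/4 = (Σ w)²/4],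
   with equality when [A = C] and [B = 0], i.e. when [Σ w e^{2iθ} = 0].
   Hence [S >= 4 / (T_s Σ w) >= 4 d_min² / (N T_s)].  For the regular N-gon
   the sums [Σ cos(4πk/N)] and [Σ sin(4πk/N)] telescope to 0 once [N >= 3],
   so equality is attained; the GDOP is the case of equal weights. *)
From Stdlib Require Import Reals Lra Lia.
Open Scope R_scope.

Lemma rsum_ext n f g :
  (forall k, (k < n)%nat -> f k = g k) -> rsum n f = rsum n g.
Proof.
  induction n as [|n IH]; intros Hfg; simpl; [reflexivity|].
  rewrite IH, Hfg; auto with arith.
Qed.

Lemma rsum_le n f g :
  (forall k, (k < n)%nat -> f k <= g k) -> rsum n f <= rsum n g.
Proof.
  induction n as [|n IH]; intros Hfg; simpl; [lra|].
  apply Rplus_le_compat; [apply IH; auto with arith | apply Hfg; lia].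
Qed.

Lemma rsum_scal n c f : rsum n (fun k => c * f k) = c * rsum n f.
Proof. induction n as [|n IH]; cbn [rsum]; [ring|]. rewrite IH; ring. Qed.

Lemma rsum_const n c : rsum n (fun _ => c) = INR n * c.
Proof. induction n as [|n IH]; simpl rsum; [simpl; ring|]. rewrite IH, S_INR; ring. Qed.

Lemma pairsum_le n g h :
  (forall j k, (j < k)%nat -> (k < n)%nat -> g j k <= h j k) ->
  pairsum n g <= pairsum n h.
Proof.
  intros Hgh; apply rsum_le; intros k Hk; apply rsum_le; intros j Hj; auto.
Qed.

Lemma pairsum_scal n c g :
  pairsum n (fun j k => c * g j k) = c * pairsum n g.
Proof.
  unfold pairsum; rewrite <- rsum_scal.
  apply rsum_ext; intros; apply rsum_scal.
Qed.

Section WeightedMoments.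

Variables (w th : nat -> R).

Definition cos2_moment n := rsum n (fun k => w k * cos (th k) ^ 2).
Definition sin2_moment n := rsum n (fun k => w k * sin (th k) ^ 2).
Definition sincos_moment n := rsum n (fun k => w k * (cos (th k) * sin (th k))).

Definition weighted_sin2_pairsum n :=
  pairsum n (fun j k => w j * w k * sin (th j - th k) ^ 2).

Lemma weighted_sin2_row_sum n m :
  rsum m (fun j => w j * w n * sin (th j - th n) ^ 2) =
  w n * (cos (th n) ^ 2 * sin2_moment m + sin (th n) ^ 2 * cos2_moment m
         - 2 * cos (th n) * sin (th n) * sincos_moment m).
Proof.
  unfold cos2_moment, sin2_moment, sincos_moment.
  induction m as [|m IH]; cbn [rsum]; [ring|].
  rewrite IH, sin_minus; ring.
Qed.

Lemma weighted_sin2_pairsum_gram n :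
  weighted_sin2_pairsum n = cos2_moment n * sin2_moment n - sincos_moment n ^ 2.
Proof.
  induction n as [|n IH].
  - unfold weighted_sin2_pairsum, pairsum, cos2_moment, sin2_moment, sincos_moment.
    simpl; ring.
  - unfold weighted_sin2_pairsum, pairsum in *; cbn [rsum].
    rewrite IH, weighted_sin2_row_sum.
    unfold cos2_moment, sin2_moment, sincos_moment; cbn [rsum]; ring.
Qed.

Lemma cos2_moment_add_sin2 n : cos2_moment n + sin2_moment n = rsum n w.
Proof.
  unfold cos2_moment, sin2_moment.
  induction n as [|n IH]; cbn [rsum]; [ring|].
  rewrite <- IH.
  replace (cos (th n) ^ 2) with (1 - sin (th n) ^ 2)
    by (rewrite <- (sin2_cos2 (th n)); unfold Rsqr; ring).
  ring.
Qed.

Lemma cos2_moment_sub_sin2 n :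
  cos2_moment n - sin2_moment n = rsum n (fun k => w k * cos (2 * th k)).
Proof.
  unfold cos2_moment, sin2_moment.
  induction n as [|n IH]; cbn [rsum]; [ring|].
  rewrite <- IH, cos_2a; ring.
Qed.

Lemma sincos_moment_double n :
  2 * sincos_moment n = rsum n (fun k => w k * sin (2 * th k)).
Proof.
  unfold sincos_moment.
  induction n as [|n IH]; cbn [rsum]; [ring|].
  rewrite <- IH, sin_2a; ring.
Qed.

Lemma weighted_sin2_pairsum_le n :
  weighted_sin2_pairsum n <= rsum n w ^ 2 / 4.
Proof.
  rewrite weighted_sin2_pairsum_gram, <- cos2_moment_add_sin2.
  pose proof (pow2_ge_0 (cos2_moment n - sin2_moment n)).
  pose proof (pow2_ge_0 (sincos_moment n)).
  nra.
Qed.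

Lemma weighted_sin2_pairsum_balanced n :
  rsum n (fun k => w k * cos (2 * th k)) = 0 ->
  rsum n (fun k => w k * sin (2 * th k)) = 0 ->
  weighted_sin2_pairsum n = rsum n w ^ 2 / 4.
Proof.
  rewrite <- cos2_moment_sub_sin2, <- sincos_moment_double.
  intros Hdiff Hcross.
  rewrite weighted_sin2_pairsum_gram, <- cos2_moment_add_sin2.
  replace (sincos_moment n) with 0 by lra.
  replace (sin2_moment n) with (cos2_moment n) by lra.
  field.
Qed.

Lemma weighted_sin2_pairsum_ge m n :
  0 <= m -> (forall k, (k < n)%nat -> m <= w k) ->
  m ^ 2 * sin2sum n th <= weighted_sin2_pairsum n.
Proof.
  intros Hm Hw; unfold sin2sum; rewrite <- pairsum_scal.
  apply pairsum_le; intros j k Hjk Hk.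
  pose proof (pow2_ge_0 (sin (th j - th k))).
  assert (m * m <= w j * w k) by (apply Rmult_le_compat; auto; apply Hw; lia).
  replace (m ^ 2) with (m * m) by ring; nra.
Qed.

End WeightedMoments.

Lemma sin2sum_unit_weights n th :
  sin2sum n th = weighted_sin2_pairsum (fun _ => 1) th n.
Proof.
  unfold sin2sum, weighted_sin2_pairsum, pairsum.
  apply rsum_ext; intros; apply rsum_ext; intros; ring.
Qed.

Lemma sin2sum_le n th : sin2sum n th <= INR n ^ 2 / 4.
Proof.
  rewrite sin2sum_unit_weights, <- (Rmult_1_r (INR n)), <- rsum_const.
  apply weighted_sin2_pairsum_le.
Qed.

(* Telescoping: [2 sin b cos(2kb) = sin((2k+1)b) - sin((2k-1)b)], and dually. *)
Lemma rsum_cos_arith b m :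
  2 * sin b * rsum m (fun k => cos (2 * INR k * b)) = sin ((2 * INR m - 1) * b) + sin b.
Proof.
  induction m as [|m IH]; simpl rsum.
  - simpl INR; replace ((2 * 0 - 1) * b) with (- b) by ring; rewrite sin_neg; ring.
  - rewrite Rmult_plus_distr_l, IH, S_INR.
    replace ((2 * (INR m + 1) - 1) * b) with (2 * INR m * b + b) by ring.
    replace ((2 * INR m - 1) * b) with (2 * INR m * b - b) by ring.
    rewrite sin_plus, sin_minus; ring.
Qed.

Lemma rsum_sin_arith b m :
  2 * sin b * rsum m (fun k => sin (2 * INR k * b)) = cos b - cos ((2 * INR m - 1) * b).
Proof.
  induction m as [|m IH]; simpl rsum.
  - simpl INR; replace ((2 * 0 - 1) * b) with (- b) by ring; rewrite cos_neg; ring.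
  - rewrite Rmult_plus_distr_l, IH, S_INR.
    replace ((2 * (INR m + 1) - 1) * b) with (2 * INR m * b + b) by ring.
    replace ((2 * INR m - 1) * b) with (2 * INR m * b - b) by ring.
    rewrite cos_plus, cos_minus; ring.
Qed.

Lemma INR_ge_3 N : (3 <= N)%nat -> 3 <= INR N.
Proof. intros HN; replace 3 with (INR 3) by (simpl; ring); apply le_INR, HN. Qed.

Lemma reg_angles_balanced N : (3 <= N)%nat ->
  rsum N (fun k => cos (2 * reg_angles N k)) = 0 /\
  rsum N (fun k => sin (2 * reg_angles N k)) = 0.
Proof.
  intros HN; pose proof (INR_ge_3 N HN); pose proof PI_RGT_0.
  set (b := 2 * PI / INR N).
  assert (Hangle : forall k, 2 * reg_angles N k = 2 * INR k * b).
  { intros k; unfold reg_angles, b; field; lra. }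
  assert (Hend : (2 * INR N - 1) * b = - b + 2 * INR 2 * PI).
  { unfold b; simpl INR; field; lra. }
  (* [0 < b < π] is exactly where [N >= 3] is used. *)
  assert (Hsinb : 0 < sin b).
  { apply sin_gt_0; unfold b.
    - apply Rdiv_lt_0_compat; lra.
    - apply Rmult_lt_reg_r with (INR N); [lra|]; field_simplify; nra. }
  split.
  - rewrite (rsum_ext _ _ (fun k => cos (2 * INR k * b))) by (intros; rewrite Hangle; reflexivity).
    pose proof (rsum_cos_arith b N) as Htel.
    rewrite Hend, sin_period, sin_neg in Htel.
    apply Rmult_eq_reg_l with (2 * sin b); lra.
  - rewrite (rsum_ext _ _ (fun k => sin (2 * INR k * b))) by (intros; rewrite Hangle; reflexivity).
    pose proof (rsum_sin_arith b N) as Htel.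
    rewrite Hend, cos_period, cos_neg in Htel.
    apply Rmult_eq_reg_l with (2 * sin b); lra.
Qed.

Lemma weighted_sin2_pairsum_reg_angles c N : (3 <= N)%nat ->
  weighted_sin2_pairsum (fun _ => c) (reg_angles N) N = (INR N * c) ^ 2 / 4.
Proof.
  intros HN; destruct (reg_angles_balanced N HN) as [Hcos Hsin].
  rewrite <- rsum_const; apply weighted_sin2_pairsum_balanced.
  - rewrite rsum_scal, Hcos; ring.
  - rewrite rsum_scal, Hsin; ring.
Qed.

Lemma sin2sum_reg_angles N : (3 <= N)%nat -> sin2sum N (reg_angles N) = INR N ^ 2 / 4.
Proof.
  intros HN; rewrite sin2sum_unit_weights, weighted_sin2_pairsum_reg_angles by exact HN.
  field.
Qed.

Lemma reg_angles_admissible N : (3 <= N)%nat -> admissible_angles N (reg_angles N).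
Proof.
  intros HN; pose proof (INR_ge_3 N HN); pose proof PI_RGT_0.
  split.
  - intros k Hk; unfold reg_angles.
    assert (INR k < INR N) by (apply lt_INR, Hk).
    pose proof (pos_INR k).
    split.
    + apply Rmult_le_pos; [nra | left; apply Rinv_0_lt_compat; lra].
    + apply Rmult_lt_reg_r with (INR N); [lra|]; field_simplify; nra.
  - rewrite sin2sum_reg_angles by exact HN; nra.
Qed.

Lemma S_bound_ge dmin dmax Ts N Rr th :
  0 < dmin -> dmin <= dmax -> 0 < Ts -> admissible_radii N dmin dmax Rr -> 0 < sin2sum N th ->
  S_bound N Ts Rr th >= 4 * dmin ^ 2 / (INR N * Ts).
Proof.
  intros Hdmin Hdmax HTs HR Hsin.
  set (w := fun k => / (Rr k ^ 2)).
  assert (Hw : forall k, (k < N)%nat -> / (dmax ^ 2) <= w k <= / (dmin ^ 2)).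
  { intros k Hk; destruct (HR k Hk); unfold w.
    split; apply Rinv_le_contravar; nra. }
  change (S_bound N Ts Rr th) with (rsum N w / (Ts * weighted_sin2_pairsum w th N)).
  set (sw := rsum N w); set (D := weighted_sin2_pairsum w th N).
  assert (HD : 0 < D).
  { apply Rlt_le_trans with ((/ dmax ^ 2) ^ 2 * sin2sum N th).
    - apply Rmult_lt_0_compat; auto.
      apply pow_lt, Rinv_0_lt_compat, pow_lt; nra.
    - apply weighted_sin2_pairsum_ge; [|apply Hw].
      left; apply Rinv_0_lt_compat, pow_lt; nra. }
  assert (HDsw : 4 * D <= sw ^ 2) by (pose proof (weighted_sin2_pairsum_le w th N); unfold D, sw; lra).
  assert (Hsw : sw * dmin ^ 2 <= INR N).
  { assert (sw <= INR N * / dmin ^ 2).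
    { unfold sw; rewrite <- rsum_const; apply rsum_le; apply Hw. }
    apply Rle_trans with (INR N * / dmin ^ 2 * dmin ^ 2).
    - apply Rmult_le_compat_r; nra.
    - right; field; lra. }
  assert (Hsw0 : 0 < sw).
  { assert (0 <= INR N * / dmax ^ 2).
    { apply Rmult_le_pos; [apply pos_INR | left; apply Rinv_0_lt_compat, pow_lt; nra]. }
    assert (INR N * / dmax ^ 2 <= sw).
    { unfold sw; rewrite <- rsum_const; apply rsum_le; apply Hw. }
    nra. }
  assert (HN : 0 < INR N)
    by (assert (0 < sw * dmin ^ 2) by (apply Rmult_lt_0_compat; nra); lra).
  (* [sw / (Ts D) >= sw / (Ts sw²/4) = 4 / (Ts sw) >= 4 dmin² / (N Ts)] *)
  apply Rle_ge, Rle_trans with (4 / (Ts * sw)).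
  - apply Rmult_le_reg_r with (INR N * Ts * sw); [repeat apply Rmult_lt_0_compat; lra|].
    field_simplify; [nra | split; lra | split; lra].
  - apply Rmult_le_reg_r with (Ts * sw * D); [repeat apply Rmult_lt_0_compat; lra|].
    field_simplify; [nra | split; lra | split; lra].
Qed.

Lemma GDOP_ge dmin Ts N r th :
  0 < dmin -> 0 < Ts -> dmin <= r -> 0 < sin2sum N th ->
  GDOP N Ts r th >= 4 * dmin ^ 2 / (INR N * Ts).
Proof.
  intros Hdmin HTs Hr Hsin; unfold GDOP.
  pose proof (sin2sum_le N th); pose proof (pos_INR N).
  assert (HN : 0 < INR N) by nra.
  assert (dmin ^ 2 <= r ^ 2) by nra.
  apply Rle_ge, Rmult_le_reg_r with (INR N * Ts * sin2sum N th);
    [repeat apply Rmult_lt_0_compat; lra|].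
  field_simplify; [nra | split; lra | split; lra].
Qed.

Lemma S_bound_reg_angles d Ts N : 0 < d -> 0 < Ts -> (3 <= N)%nat ->
  S_bound N Ts (fun _ => d) (reg_angles N) = 4 * d ^ 2 / (INR N * Ts).
Proof.
  intros Hd HTs HN; pose proof (INR_ge_3 N HN).
  unfold S_bound; rewrite rsum_const.
  change (pairsum N _) with (weighted_sin2_pairsum (fun _ => / d ^ 2) (reg_angles N) N).
  rewrite weighted_sin2_pairsum_reg_angles by exact HN.
  field; split; lra.
Qed.

Lemma GDOP_reg_angles d Ts N : 0 < Ts -> (3 <= N)%nat ->
  GDOP N Ts d (reg_angles N) = 4 * d ^ 2 / (INR N * Ts).
Proof.
  intros HTs HN; pose proof (INR_ge_3 N HN).
  unfold GDOP; rewrite sin2sum_reg_angles by exact HN.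
  field; split; lra.
Qed.

Theorem mainTheorem7 (dmin dmax Ts : R) (N : nat)
  (hd : 0 < dmin) (hdd : dmin < dmax) (hN : (3 <= N)%nat) (hT : 0 < Ts) :
  (forall Rr th : nat -> R,
     admissible_radii N dmin dmax Rr -> admissible_angles N th ->
     S_bound N Ts Rr th >= 4 * dmin ^ 2 / (INR N * Ts)) /\
  admissible_radii N dmin dmax (fun _ => dmin) /\
  admissible_angles N (reg_angles N) /\
  S_bound N Ts (fun _ => dmin) (reg_angles N) = 4 * dmin ^ 2 / (INR N * Ts) /\
  (forall (r : R) (th : nat -> R),
     dmin <= r <= dmax -> admissible_angles N th ->
     GDOP N Ts r th >= 4 * dmin ^ 2 / (INR N * Ts)) /\
  GDOP N Ts dmin (reg_angles N) = 4 * dmin ^ 2 / (INR N * Ts).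
Proof.
  split; [|split; [|split; [|split; [|split]]]].
  - intros Rr th HR [_ Hsin]; eapply S_bound_ge; eauto; lra.
  - intros k _; lra.
  - apply reg_angles_admissible, hN.
  - apply S_bound_reg_angles; assumption.
  - intros r th Hr [_ Hsin]; apply GDOP_ge; lra.
  - apply GDOP_reg_angles; assumption.
Qed.
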